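(* Let $\Gamma$ be an $n$-dimensional crystallographic group with holonomy group $F\subseteq\mathrm{GL}_n(\mathbb{Z})$. If the normaliser $N_{\mathrm{GL}_n(\mathbb{Z})}(F)$ is finite, then the Reidemeister spectrum $\mathrm{Spec}_R(\Gamma)$ is finite.
   Context: An $n$-dimensional crystallographic group is a discrete cocompact subgroup of $\mathbb{R}^n\rtimes O(n)$; it is realised inside $\mathrm{Aff}(\mathbb{R}^n)=\mathbb{R}^n\rtimes\mathrm{GL}_n(\mathbb{R})$ such that its subgroup of pure translations is exactly $\{(z,I_n)\mid z\in\mathbb{Z}^n\}$. The holonomy group is $F=\{A\mid\exists a:\ (a,A)\in\Gamma\}\subseteq\mathrm{GL}_n(\mathbb{Z})$. For an automorphism $\varphi$ of a group $G$, $R(\varphi)\in\{1,2,\dots\}\cup\{\infty\}$ is the number of classes of the relation $g\sim g'\iff\exists h\in G: g=hg'\varphi(h)^{-1}$, and $\mathrm{Spec}_R(G)=\{R(\varphi)\mid\varphi\in\mathrm{Aut}(G)\}$. *)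

From HB Require Import structures.
From mathcomp Require Import all_boot all_order all_algebra.
From mathcomp Require Import boolp classical_sets cardinality reals.
Set Implicit Arguments. Unset Strict Implicit. Unset Printing Implicit Defensive.
Import Order.TTheory GRing.Theory Num.Theory.
Local Open Scope ring_scope.
Local Open Scope classical_set_scope.

Section Affine.
Variables (R : realType) (n : nat).

(* An element (a, A) of Aff(R^n) = R^n x| GL_n(R) : x |-> A x + a. *)
Definition aff := ('cV[R]_n * 'M[R]_n)%type.

Definition aff_one : aff := (0, 1%:M).
Definition aff_mul (g h : aff) : aff := (g.1 + g.2 *m h.1, g.2 *m h.2).
Definition aff_inv (g : aff) : aff := (- (invmx g.2 *m g.1), invmx g.2).

Definition is_aff : set aff := [set g | g.2 \in unitmx].

Definition aff_subgroup (G : set aff) : Prop :=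
  [/\ G `<=` is_aff, G aff_one,
      (forall g h, G g -> G h -> G (aff_mul g h)) &
      (forall g, G g -> G (aff_inv g))].

Definition is_isometry : set aff := [set g | g.2 *m g.2^T = 1%:M].

(* sup-distance (on coordinates) less than e: the standard topology *)
Definition aff_close (e : R) (g h : aff) : Prop :=
  (forall i, `|g.1 i 0 - h.1 i 0| < e) /\
  (forall i j, `|g.2 i j - h.2 i j| < e).

Definition aff_discrete (G : set aff) : Prop :=
  forall g, G g -> exists2 e : R, 0 < e & forall h, G h -> aff_close e g h -> h = g.

(* G is cocompact in E(n): there is a compact K = {(x,X) in E(n) | |x|_oo <= r}
   with G K = E(n). *)
Definition cocompact_in_E (G : set aff) : Prop :=
  exists r : R, forall y, is_isometry y ->
    exists2 g, G g & forall i, `|(aff_mul g y).1 i 0| <= r.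

Definition euclidean_crystallographic (G : set aff) : Prop :=
  [/\ aff_subgroup G, G `<=` is_isometry, aff_discrete G & cocompact_in_E G].

Definition aff_conj (h : aff) (G : set aff) : set aff :=
  [set aff_mul (aff_mul h g) (aff_inv h) | g in G].

(* An n-dimensional crystallographic group, realised inside Aff(R^n) (i.e. an
   affine conjugate of a discrete cocompact subgroup of E(n)) so that its pure
   translations are exactly Z^n. *)
Definition crystallographic_Zn (G : set aff) : Prop :=
  [/\ aff_subgroup G,
      (exists2 h, is_aff h & euclidean_crystallographic (aff_conj (aff_inv h) G)) &
      (forall z : 'cV[R]_n, G (z, 1%:M) <-> forall i, z i 0 \is a Num.int)].

Definition holonomy (G : set aff) : set 'M[R]_n :=
  [set A | exists a, G (a, A)].

Definition intmx (A : 'M[int]_n) : 'M[R]_n := map_mx (fun z : int => z%:~R) A.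

Definition GLZ_normaliser (F : set 'M[R]_n) : set 'M[int]_n :=
  [set A | A \in unitmx /\
           [set intmx A *m B *m invmx (intmx A) | B in F] = F].

Definition is_aut (G : set aff) (phi : aff -> aff) : Prop :=
  [/\ (forall g, G g -> G (phi g)),
      (forall g h, G g -> G h -> phi (aff_mul g h) = aff_mul (phi g) (phi h)),
      (forall g h, G g -> G h -> phi g = phi h -> g = h) &
      (forall h, G h -> exists2 g, G g & phi g = h)].

Definition twisted_conj (G : set aff) (phi : aff -> aff) (g g' : aff) : Prop :=
  exists2 h, G h & g = aff_mul (aff_mul h g') (aff_inv (phi h)).

Definition has_k_classes (G : set aff) (phi : aff -> aff) (k : nat) : Prop :=
  exists s : seq aff,
    [/\ size s = k,
        (forall i, (i < k)%N -> G (nth aff_one s i)),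
        (forall i j, (i < k)%N -> (j < k)%N ->
           twisted_conj G phi (nth aff_one s i) (nth aff_one s j) -> i = j) &
        (forall g, G g -> exists2 i, (i < k)%N & twisted_conj G phi g (nth aff_one s i))].

(* R(phi) = r, with None standing for infinity *)
Definition reidemeister (G : set aff) (phi : aff -> aff) (r : option nat) : Prop :=
  match r with
  | Some k => has_k_classes G phi k
  | None => forall k, ~ has_k_classes G phi k
  end.

Definition reidemeister_spectrum (G : set aff) : set (option nat) :=
  [set r | exists phi, is_aut G phi /\ reidemeister G phi r].

End Affine.

From HB Require Import structures.
From mathcomp Require Import all_boot all_order all_algebra.
From mathcomp Require Import boolp classical_sets cardinality reals.
From mathcomp.algebra_tactics Require Import lra.
Set Implicit Arguments. Unset Strict Implicit. Unset Printing Implicit Defensive.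
Import Order.TTheory GRing.Theory Num.Theory.
Local Open Scope ring_scope.
Local Open Scope classical_set_scope.

(* Every holonomy matrix A is integral and its integer version lies in the
   normaliser N, so the holonomy group F is finite.  An automorphism phi maps
   Z^n into itself: the image (a, A) of a translation commutes with its
   conjugates by translations, which gives (A - 1)^2 = 0, and a unipotent matrix
   of finite order is 1.  So phi acts on Z^n by an integer matrix D, invertible
   over Z, and phi(a, A) has linear part D A D^-1, whence D lies in N.  Twisting
   (c, A) by a translation z yields (c + (1 - A D) z, A).  If det (1 - A D) = 0
   for some A in F, a row vector v with v (1 - A D) = 0 separates infinitely many
   classes.  Otherwise, reducing modulo (1 - A D) Z^n, every class contains some
   (c_A + r, A) with 0 <= r_i < |det (1 - A D)|, so R(phi) <= |N| K^n where K
   bounds |det (1 - A B)| over A, B in N, independently of phi. *)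

Section AffineGroup.
Variables (R : realType) (n : nat).
Local Notation aff := (aff R n).
Local Notation aff1 := (aff_one R n).
Local Notation V := 'cV[R]_n.
Implicit Types g h k : aff.

Definition aff_tr (z : V) : aff := (z, 1%:M).

Lemma aff_tr_inj : injective aff_tr. Proof. by move=> z w []. Qed.

Lemma aff_mulA g h k : aff_mul (aff_mul g h) k = aff_mul g (aff_mul h k).
Proof. by rewrite /aff_mul /= mulmxDr !mulmxA addrA. Qed.

Lemma aff_mul1g g : aff_mul aff1 g = g.
Proof. by case: g => a A; rewrite /aff_mul /aff_one /= !mul1mx add0r. Qed.

Lemma aff_mulg1 g : aff_mul g aff1 = g.
Proof. by case: g => a A; rewrite /aff_mul /aff_one /= mulmx0 addr0 !mulmx1. Qed.

Lemma aff_mulVg g : is_aff g -> aff_mul (aff_inv g) g = aff1.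
Proof. by case: g => a A uA; rewrite /aff_mul /aff_one /= mulVmx // addNr. Qed.

Lemma aff_mulgV g : is_aff g -> aff_mul g (aff_inv g) = aff1.
Proof.
by case: g => a A uA; rewrite /aff_mul /aff_one /= mulmxN mulmxA !mulmxV // mul1mx subrr.
Qed.

Lemma is_affM g h : is_aff g -> is_aff h -> is_aff (aff_mul g h).
Proof. by rewrite /is_aff /= unitmx_mul => -> ->. Qed.

Lemma is_affV g : is_aff g -> is_aff (aff_inv g).
Proof. by rewrite /is_aff /= unitmx_inv. Qed.

Lemma aff_mulKg g h : is_aff g -> aff_mul (aff_inv g) (aff_mul g h) = h.
Proof. by move=> ug; rewrite -aff_mulA aff_mulVg // aff_mul1g. Qed.

Lemma aff_mulgK g h : is_aff g -> aff_mul (aff_mul h g) (aff_inv g) = h.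
Proof. by move=> ug; rewrite aff_mulA aff_mulgV // aff_mulg1. Qed.

Lemma aff_mulgVK g h : is_aff g -> aff_mul (aff_mul h (aff_inv g)) g = h.
Proof. by move=> ug; rewrite aff_mulA aff_mulVg // aff_mulg1. Qed.

Lemma aff_inv_uniq g h : is_aff g -> aff_mul h g = aff1 -> h = aff_inv g.
Proof. by move=> ug hg1; rewrite -(aff_mulgK h ug) hg1 aff_mul1g. Qed.

Lemma aff_invM g h : is_aff g -> is_aff h ->
  aff_inv (aff_mul g h) = aff_mul (aff_inv h) (aff_inv g).
Proof.
move=> ug uh; apply/esym/aff_inv_uniq; first exact: is_affM.
by rewrite aff_mulA -(aff_mulA (aff_inv g)) aff_mulVg // aff_mul1g aff_mulVg.
Qed.

Lemma aff_invK g : is_aff g -> aff_inv (aff_inv g) = g.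
Proof. by move=> ug; apply/esym/aff_inv_uniq; [exact: is_affV | exact: aff_mulgV]. Qed.

Lemma aff_tr_mul (z w : V) : aff_mul (aff_tr z) (aff_tr w) = aff_tr (z + w).
Proof. by rewrite /aff_mul /= mul1mx mulmx1. Qed.

Lemma aff_tr_inv (z : V) : aff_inv (aff_tr z) = aff_tr (- z).
Proof. by rewrite /aff_inv /= invmx1 mul1mx. Qed.

Lemma aff_tr_mull (w c : V) A : aff_mul (aff_tr w) (c, A) = (w + c, A).
Proof. by rewrite /aff_mul /= !mul1mx. Qed.

Lemma aff_tr_mulr (c w : V) A : aff_mul (c, A) (aff_tr w) = (c + A *m w, A).
Proof. by rewrite /aff_mul /= mulmx1. Qed.

Lemma aff_conj_tr (a z : V) A : A \in unitmx ->
  aff_mul (aff_mul (a, A) (aff_tr z)) (aff_inv (a, A)) = aff_tr (A *m z).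
Proof.
move=> uA; rewrite aff_tr_mulr /aff_mul /aff_inv /= mulmxV // mulmxN mulmxA.
by rewrite mulmxV // mul1mx addrAC subrr add0r.
Qed.

Lemma aff_mulV_tr (c c' : V) A : A \in unitmx ->
  aff_mul (c, A) (aff_inv (c', A)) = aff_tr (c - c').
Proof. by move=> uA; rewrite /aff_mul /aff_inv /= mulmxN mulmxA !mulmxV // mul1mx. Qed.

Lemma aff_commute_tr_conj (a w : V) A :
  let g := aff_mul (aff_mul (aff_tr w) (a, A)) (aff_tr (- w)) in
  aff_mul (a, A) g = aff_mul g (a, A) -> (A - 1%:M) *m (A - 1%:M) *m w = 0.
Proof.
rewrite /= aff_tr_mull aff_tr_mulr /aff_mul /= => /(congr1 fst) /=.
rewrite !mulmxDr !mulmxN !mulmxBl -!mulmxA !mul1mx.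
move: (A *m (A *m w)) (A *m w) (A *m a) => y x b /matrixP E.
by apply/matrixP => i j; move: (E i j); rewrite !mxE; lra.
Qed.
End AffineGroup.

(* In characteristic 0 the powers [(1 + N) ^+ k = 1 + k N] are pairwise
   distinct unless [N = 0]. *)
Lemma unipotent_finite_powers_eq1 (R : numDomainType) m (A : 'M[R]_m) :
  finite_set (range (GRing.exp A)) -> (A - 1) ^+ 2 = 0 -> A = 1.
Proof.
move=> finA N2.
have powA k : A ^+ k = 1 + (A - 1) *+ k.
  elim: k => [|k IHk]; first by rewrite expr0 mulr0n addr0.
  rewrite exprS IHk mulrDr mulr1 mulrnAr.
  have -> : A * (A - 1) = (A - 1) ^+ 2 + (A - 1) by rewrite expr2 mulrBl mul1r subrK.
  by rewrite N2 add0r mulrS addrCA addrA subrK.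
suff N0 : A - 1 = 0 by apply/eqP; rewrite -subr_eq0 N0.
apply/matrixP => i j; rewrite [RHS]mxE; apply/eqP/contraT => Nij.
exfalso; apply: infinite_nat.
rewrite -(_ : GRing.exp A @^-1` range (GRing.exp A) = [set: nat]); last first.
  by apply/seteqP; split => // k _; exists k.
apply: finite_preimage finA => k l _ _; rewrite !powA => /addrI /matrixP /(_ i j).
by rewrite !mulmxnE; apply: mulrIn.
Qed.

Notation zmx := (map_mx intr).

Lemma zmx_inj (R : numDomainType) p q :
  injective (zmx : 'M[int]_(p, q) -> 'M[R]_(p, q)).
Proof.
move=> A B /matrixP eqAB; apply/matrixP => i j.
by move: (eqAB i j); rewrite !mxE => /intr_inj.
Qed.

Lemma mxOver_intP (R : archiNumDomainType) p q (A : 'M[R]_(p, q)) :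
  reflect (exists B, A = zmx B) (A \is a mxOver Num.int).
Proof.
apply: (iffP mxOverP) => [Aint | [B ->] i j]; last by rewrite mxE intr_int.
by exists (map_mx Num.floor A); apply/matrixP => i j; rewrite !mxE floorK.
Qed.

Lemma zmx_unit (R : numDomainType) p (A B : 'M[int]_p) :
  zmx A *m zmx B = 1%:M :> 'M[R]_p -> A \in unitmx.
Proof. by rewrite -map_mxM -(map_mx1 intr) => /zmx_inj /mulmx1_unit []. Qed.

Lemma col_reduce_mod_det p (P : 'M[int]_p) (y : 'cV[int]_p) : \det P != 0 ->
  exists w : 'cV[int]_p, forall i, 0 <= (y - P *m w) i 0 < `|\det P|.
Proof.
move=> d0; exists (\adj P *m map_mx (fun t => (t %/ \det P)%Z) y) => i.
rewrite mulmxA mul_mx_adj mul_scalar_mx !mxE mulrC.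
by rewrite [X in X - _](divz_eq (y i 0) (\det P)) addrC addKr modz_ge0 // ltz_mod.
Qed.

Lemma additive_int_colE m p (f : {additive 'cV[int]_m -> 'cV[int]_p}) z :
  f z = (\matrix_(i, j) f (delta_mx j 0) i 0) *m z.
Proof.
rewrite (matrix_sum_delta z) raddf_sum mulmx_sumr; apply: eq_bigr => i _.
rewrite big_ord1 -scalemxAr -colE -[z i ord0]intz !scaler_int raddfMz.
by congr (_ *~ _); apply/matrixP => k l; rewrite (ord1 l) !mxE.
Qed.

Lemma mulmx_deltaP (R : pzRingType) m p (A B : 'M[R]_(m, p)) :
  (forall j, A *m (delta_mx j 0 : 'cV_p) = B *m delta_mx j 0) <-> A = B.
Proof.
split=> [eqAB | -> //]; apply/matrixP => i j.
by move: (eqAB j); rewrite -!colE => /matrixP /(_ i 0); rewrite !mxE.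
Qed.

Lemma reidemeister_spectrum_finite (R : realType) n (G : set (aff R n)) M :
  (forall phi k, is_aut G phi -> has_k_classes G phi k -> (k <= M)%N) ->
  finite_set (reidemeister_spectrum G).
Proof.
move=> bound; apply: (sub_finite_set (B := [set None] `|` Some @` `I_M.+1)).
  case=> [k|] [phi [phi_aut /= classes_k]]; last by left.
  by right; exists k; rewrite //= ltnS; exact: bound classes_k.
by rewrite finite_setU; split; [exact: finite_set1 | exact/finite_image/finite_II].
Qed.

Section Crystallographic.
Variables (R : realType) (n : nat) (G : set (aff R n)).
Hypothesis G_subgroup : aff_subgroup G.
Hypothesis G_trE : forall z : 'cV[R]_n, G (z, 1%:M) <-> forall i, z i 0 \is a Num.int.
Local Notation aff := (aff R n).
Local Notation aff1 := (aff_one R n).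
Local Notation V := 'cV[R]_n.
Local Notation F := (holonomy G).
Implicit Types g h : aff.

Lemma G_aff g : G g -> is_aff g.
Proof. by case: G_subgroup => + _ _ _; apply. Qed.

Lemma G1 : G aff1.
Proof. by case: G_subgroup. Qed.

Lemma GM g h : G g -> G h -> G (aff_mul g h).
Proof. by case: G_subgroup => _ _ + _; apply. Qed.

Lemma GV g : G g -> G (aff_inv g).
Proof. by case: G_subgroup => _ _ _; apply. Qed.

Lemma G_trP (z : V) : G (aff_tr z) <-> z \is a mxOver Num.int.
Proof.
rewrite G_trE; split=> [zint | /mxOverP zint i]; last exact: zint.
by apply/mxOverP => i j; rewrite (ord1 j).
Qed.

Lemma G_tr_zmx (z : 'cV[int]_n) : G (aff_tr (zmx z)).
Proof. by apply/G_trP/mxOver_intP; exists z. Qed.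

Lemma G_tr_delta j : G (aff_tr (delta_mx j 0)).
Proof. by rewrite -(map_delta_mx intr); exact: G_tr_zmx. Qed.

Lemma G_conj_tr (a z : V) A : G (a, A) -> G (aff_tr z) -> G (aff_tr (A *m z)).
Proof.
move=> Ga Gz; rewrite -(aff_conj_tr a z (G_aff Ga)).
by apply: GM (GV Ga); exact: GM.
Qed.

Lemma holonomy_int A : F A -> A \is a mxOver Num.int.
Proof.
case=> a Ga; apply/mxOverP => i j.
have /G_trP/mxOverP/(_ i 0) := G_conj_tr Ga (G_tr_delta j).
by rewrite -colE mxE.
Qed.

Lemma holonomy1 : F 1%:M. Proof. by exists 0; exact: G1. Qed.

Lemma holonomyM A B : F A -> F B -> F (A *m B).
Proof. by move=> [a Ga] [b Gb]; exists (a + A *m b); exact: GM Ga Gb. Qed.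

Lemma holonomyV A : F A -> F (invmx A).
Proof. by move=> [a Ga]; exists (- (invmx A *m a)); exact: GV Ga. Qed.

Lemma holonomy_unit A : F A -> A \in unitmx.
Proof. by move=> [a /G_aff]. Qed.

Lemma holonomy_normaliser B : F (zmx B) -> GLZ_normaliser F B.
Proof.
move=> FB; have FB' := holonomyV FB; split.
  have /mxOver_intP[C eC] := holonomy_int FB'.
  by apply: (@zmx_unit R _ _ C); rewrite -eC mulmxV // holonomy_unit.
rewrite /intmx; apply/seteqP; split=> [_ [A FA <-] | A FA].
  by apply: holonomyM FB'; exact: holonomyM.
exists (invmx (zmx B) *m A *m zmx B).
  by apply: holonomyM => //; exact: holonomyM.
by rewrite !mulmxA mulmxV ?mul1mx ?mulmxK // holonomy_unit.
Qed.

Hypothesis normaliser_finite : finite_set (GLZ_normaliser F).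

Lemma holonomy_finite : finite_set F.
Proof.
apply: sub_finite_set (finite_image zmx normaliser_finite) => A FA.
have /mxOver_intP[B eB] := holonomy_int FA.
by exists B => //; apply: holonomy_normaliser; rewrite -eB.
Qed.

Lemma holonomy_unipotent A : F A -> (A - 1) ^+ 2 = 0 -> A = 1.
Proof.
move=> FA; apply: unipotent_finite_powers_eq1.
apply: sub_finite_set holonomy_finite => _ [k _ <-].
elim: k => [|k IHk]; first exact: holonomy1.
by rewrite exprSr; exact: holonomyM.
Qed.

(* An arbitrary translation part over [A] (junk [0] if [A] is not in [F]). *)
Definition holonomy_lift A : V := xget 0 [set c | G (c, A)].

Lemma holonomy_liftP A : F A -> G (holonomy_lift A, A).
Proof. by move=> FA; apply: (xgetPex 0 (P := [set c | G (c, A)])). Qed.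

Definition normaliser_seq : seq 'M[int]_n :=
  projT1 (cid ((finite_seqP _).1 normaliser_finite)).

Lemma normaliser_seqE : GLZ_normaliser F = [set` normaliser_seq].
Proof. by rewrite /normaliser_seq; case: cid. Qed.

Definition twist_det_bound : nat :=
  (\max_(A <- normaliser_seq) \max_(B <- normaliser_seq) `|\det (1%:M - A *m B)|%N).+1.

Lemma twist_det_lt A B : GLZ_normaliser F A -> GLZ_normaliser F B ->
  (`|\det (1%:M - A *m B)|%N < twist_det_bound)%N.
Proof.
rewrite normaliser_seqE /= => NA NB; rewrite ltnS.
apply: leq_trans (leq_bigmax_seq _ NA isT); exact: leq_bigmax_seq.
Qed.

Section Automorphism.
Variable phi : aff -> aff.
Hypothesis phi_aut : is_aut G phi.

Lemma autG g : G g -> G (phi g). Proof. by case: phi_aut => + _ _ _; apply. Qed.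

Lemma autM g h : G g -> G h -> phi (aff_mul g h) = aff_mul (phi g) (phi h).
Proof. by case: phi_aut => _ + _ _; apply. Qed.

Lemma aut_inj g h : G g -> G h -> phi g = phi h -> g = h.
Proof. by case: phi_aut => _ _ + _; apply. Qed.

Lemma aut_surj h : G h -> exists2 g, G g & phi g = h.
Proof. by case: phi_aut => _ _ _; apply. Qed.

Lemma aut1 : phi aff1 = aff1.
Proof.
have u1 : is_aff (phi aff1) by apply/G_aff/autG/G1.
by rewrite -[LHS](aff_mulgK _ u1) -(autM G1 G1) aff_mul1g aff_mulgV.
Qed.

Lemma autV g : G g -> phi (aff_inv g) = aff_inv (phi g).
Proof.
move=> Gg; apply: aff_inv_uniq; first exact/G_aff/autG.
by rewrite -(autM (GV Gg) Gg) aff_mulVg ?aut1 //; exact: G_aff.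
Qed.

Lemma aut_tr (z : V) : G (aff_tr z) -> exists a, phi (aff_tr z) = aff_tr a.
Proof.
move=> Gz; case E : (phi (aff_tr z)) => [a A]; exists a.
have GaA : G (a, A) by rewrite -E; exact: autG.
suff -> : A = 1 by [].
apply: holonomy_unipotent; first by exists a.
apply/mulmx_deltaP => j; rewrite mul0mx expr2 -mulmxE.
have [[b B] Gs Es] := aut_surj (G_tr_delta j).
have Gz' := G_conj_tr Gs Gz.
apply: (aff_commute_tr_conj (a := a)).
rewrite -aff_tr_inv -Es -E -(autV Gs) -(autM Gs Gz) -(autM (GM Gs Gz) (GV Gs)).
rewrite (aff_conj_tr _ _ (G_aff Gs)) -(autM Gz Gz') -(autM Gz' Gz).
by rewrite !aff_tr_mul addrC.
Qed.

Definition aut_lin (z : 'cV[int]_n) : 'cV[int]_n :=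
  map_mx Num.floor (phi (aff_tr (zmx z))).1.

Lemma aut_tr_zmx (z : 'cV[int]_n) :
  phi (aff_tr (zmx z)) = aff_tr (zmx (aut_lin z)).
Proof.
have Gz := G_tr_zmx z; have [a Ea] := aut_tr Gz.
have Ga : G (aff_tr a) by rewrite -Ea; exact: autG.
rewrite /aut_lin Ea; have /G_trP/mxOver_intP[a' ->] := Ga.
by congr (aff_tr (zmx _)); apply/matrixP => i j; rewrite !mxE intrKfloor.
Qed.

Fact aut_lin_is_zmod_morphism : zmod_morphism aut_lin.
Proof.
move=> x y; apply: (@zmx_inj R); apply: aff_tr_inj.
have [Gx Gy] := (G_tr_zmx x, G_tr_zmx y).
rewrite -aut_tr_zmx map_mxB -aff_tr_mul -aff_tr_inv (autM Gx (GV Gy)) (autV Gy).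
by rewrite !aut_tr_zmx aff_tr_inv aff_tr_mul map_mxB.
Qed.

HB.instance Definition _ :=
  GRing.isZmodMorphism.Build _ _ aut_lin aut_lin_is_zmod_morphism.

Definition aut_mx : 'M[int]_n := \matrix_(i, j) aut_lin (delta_mx j 0) i 0.
Local Notation D := (zmx aut_mx : 'M[R]_n).

Lemma aut_trE (z : V) : G (aff_tr z) -> phi (aff_tr z) = aff_tr (D *m z).
Proof.
move=> /G_trP/mxOver_intP[z' ->].
by rewrite aut_tr_zmx -map_mxM -additive_int_colE.
Qed.

(* A preimage [(a, B)] of a translation commutes with every translation, since
   their images do; hence [B = 1]. *)
Lemma aut_mx_surj (e : 'cV[int]_n) : exists u, aut_mx *m u = e.
Proof.
have [[a B] Gg Eg] := aut_surj (G_tr_zmx e).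
have B1 : B = 1%:M.
  apply/mulmx_deltaP => j; rewrite mul1mx; have Gj := G_tr_delta j.
  have : aff_mul (aff_tr (delta_mx j 0)) (a, B) =
         aff_mul (a, B) (aff_tr (delta_mx j 0)).
    apply: aut_inj; [exact: GM | exact: GM | rewrite !autM // Eg aut_trE //].
    by rewrite !aff_tr_mul addrC.
  by rewrite aff_tr_mull aff_tr_mulr addrC => -[] /addrI <-.
move: Gg Eg; rewrite B1 -/(aff_tr a) => /G_trP/mxOver_intP[u ->].
by rewrite aut_tr_zmx additive_int_colE => /aff_tr_inj /zmx_inj <-; exists u.
Qed.

Lemma aut_mx_inverse : exists E, aut_mx *m E = 1%:M.
Proof.
have [u uP] := choice (fun j : 'I_n => aut_mx_surj (delta_mx j 0)).
exists (\matrix_(i, j) u j i 0); apply/mulmx_deltaP => j.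
rewrite -mulmxA -colE mul1mx -(uP j); congr (_ *m _).
by apply/matrixP => i k; rewrite (ord1 k) !mxE.
Qed.

Lemma aut_mx_unit : aut_mx \in unitmx /\ D \in unitmx.
Proof.
have [E DE] := aut_mx_inverse; split; first by case: (mulmx1_unit DE).
have : D *m zmx E = 1%:M by rewrite -map_mxM DE map_mx1.
by case/mulmx1_unit.
Qed.

Lemma aut_holonomy (a : V) A : G (a, A) -> (phi (a, A)).2 = D *m A *m invmx D.
Proof.
move=> Ga; case E : (phi (a, A)) => [b B] /=.
have Gb : G (b, B) by rewrite -E; exact: autG.
suff -> : D *m A = B *m D by rewrite mulmxK //; case: aut_mx_unit.
apply/mulmx_deltaP => j; rewrite -!mulmxA; have Gj := G_tr_delta j.
have := aut_trE (G_conj_tr Ga Gj).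
rewrite -(aff_conj_tr a _ (G_aff Ga)) (autM (GM Ga Gj) (GV Ga)) (autM Ga Gj).
by rewrite (autV Ga) E (aut_trE Gj) (aff_conj_tr b _ (G_aff Gb)) => /aff_tr_inj ->.
Qed.

Lemma aut_mx_normaliser : GLZ_normaliser F aut_mx.
Proof.
split; first by case: aut_mx_unit.
rewrite /intmx; apply/seteqP; split=> [_ [A [a Ga] <-] | B [b Gb]].
  rewrite -(aut_holonomy Ga); exists (phi (a, A)).1.
  by rewrite -surjective_pairing; exact: autG.
have [[a A] Ga E] := aut_surj Gb.
by exists A; [exists a | rewrite -(aut_holonomy Ga) E].
Qed.

Local Notation tc := (twisted_conj G phi).

Lemma twisted_conj_sym g g' : G g' -> tc g g' -> tc g' g.
Proof.
move=> Gg' [h Gh ->]; exists (aff_inv h); first exact: GV.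
have uph : is_aff (phi h) by apply/G_aff/autG.
by rewrite (autV Gh) aff_invK // aff_mulA aff_mulgVK // aff_mulKg //; exact: G_aff.
Qed.

Lemma twisted_conj_trans g g' g'' : tc g g' -> tc g' g'' -> tc g g''.
Proof.
move=> [h Gh ->] [k Gk ->]; exists (aff_mul h k); first exact: GM.
have [uph upk] : is_aff (phi h) /\ is_aff (phi k) by split; apply/G_aff/autG.
by rewrite (autM Gh Gk) (aff_invM uph upk) !aff_mulA.
Qed.

Lemma twist_tr (c w : V) A : G (aff_tr w) ->
  aff_mul (aff_mul (aff_tr w) (c, A)) (aff_inv (phi (aff_tr w))) =
  (c + (1%:M - A *m D) *m w, A).
Proof.
move=> Gw; rewrite aut_trE // aff_tr_inv aff_tr_mull aff_tr_mulr.
by rewrite mulmxBl mul1mx mulmxN mulmxA addrCA addrA.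
Qed.

Lemma twisted_conj_box (c : V) A' : G (c, zmx A') ->
  \det (1%:M - A' *m aut_mx) != 0 ->
  exists2 r : 'cV[int]_n, (forall i, 0 <= r i 0 < `|\det (1%:M - A' *m aut_mx)|) &
    tc (holonomy_lift (zmx A') + zmx r, zmx A') (c, zmx A').
Proof.
move=> Gc d0.
have Gb : G (holonomy_lift (zmx A'), zmx A') by apply: holonomy_liftP; exists c.
have /G_trP/mxOver_intP[y Ey] : G (aff_tr (c - holonomy_lift (zmx A'))).
  by rewrite -(aff_mulV_tr _ _ (G_aff Gc)); exact: GM Gc (GV Gb).
have [w wP] := col_reduce_mod_det y d0.
exists (y - (1%:M - A' *m aut_mx) *m w) => //.
exists (aff_tr (zmx (- w))); first exact: G_tr_zmx.
rewrite (twist_tr _ _ (G_tr_zmx _)); congr pair.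
rewrite map_mxB map_mxM map_mxB map_mx1 map_mxM map_mxN mulmxN -Ey.
by rewrite addrA [holonomy_lift _ + _]addrCA subrr addr0.
Qed.

Lemma has_k_classes_le (K : finType) (rep : K -> aff) k :
  (forall g, G g -> exists key, tc (rep key) g) -> has_k_classes G phi k ->
  (k <= #|K|)%N.
Proof.
move=> repP [s [_ sG sinj _]].
have [key keyP] := choice (fun i : 'I_k => repP _ (sG i (ltn_ord i))).
suff key_inj : injective key by rewrite -[k]card_ord; exact: leq_card key_inj.
move=> i j eq_key; apply/val_inj/sinj; try exact: ltn_ord.
apply: twisted_conj_trans (keyP j); rewrite -eq_key.
exact: twisted_conj_sym (sG i (ltn_ord i)) (keyP i).
Qed.

Lemma reidemeister_le_of_det_neq0 k :
  (forall A', F (zmx A') -> \det (1%:M - A' *m aut_mx) != 0) ->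
  has_k_classes G phi k -> (k <= size normaliser_seq * twist_det_bound ^ n)%N.
Proof.
move=> det_neq0; set Ns := normaliser_seq; set K := twist_det_bound.
pose rep (key : 'I_(size Ns) * {ffun 'I_n -> 'I_K}) : aff :=
  let A := zmx (nth 0 Ns key.1) in
  (holonomy_lift A + zmx (\col_i (key.2 i : int)), A).
suff /has_k_classes_le le_card : forall g, G g -> exists key, tc (rep key) g.
  by move=> /le_card; rewrite card_prod card_ffun !card_ord.
move=> [c A] Gc; have FA : F A by exists c.
have /mxOver_intP[A' EA] := holonomy_int FA; rewrite EA in Gc FA.
have NA' := holonomy_normaliser FA.
have A'_Ns : A' \in Ns by rewrite normaliser_seqE in NA'.
have idx_lt : (index A' Ns < size Ns)%N by rewrite index_mem.
have [r rP tc_r] := twisted_conj_box Gc (det_neq0 _ FA).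
have r_lt i : (`|r i ord0|%N < K)%N.
  have /andP[r_ge0 r_lt] := rP i.
  apply: ltn_trans (twist_det_lt NA' aut_mx_normaliser).
  by rewrite -ltz_nat !abszE ger0_norm.
exists (Ordinal idx_lt, [ffun i => Ordinal (r_lt i)]).
rewrite /rep /= nth_index // EA (_ : \col_i _ = r) //.
apply/matrixP => i j; rewrite (ord1 j) mxE ffunE /= abszE ger0_norm //.
by case/andP: (rP i).
Qed.

(* [h h'^-1] is a translation [t], and [(c, A)] is the twist of [(c', A)] by [t]. *)
Lemma twisted_conj_same_linear (c c' : V) A g h h' : G h -> G h' -> h.2 = h'.2 ->
  (c, A) = aff_mul (aff_mul h g) (aff_inv (phi h)) ->
  (c', A) = aff_mul (aff_mul h' g) (aff_inv (phi h')) ->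
  exists t, c = c' + (1%:M - A *m D) *m zmx t.
Proof.
move=> Gh Gh' eq_h Ec Ec'; pose u := aff_mul h (aff_inv h').
have Gu : G u := GM Gh (GV Gh').
have Eu : u = aff_tr u.1 by rewrite [LHS]surjective_pairing /= eq_h mulmxV // G_aff.
have /G_trP/mxOver_intP[t Et] : G (aff_tr u.1) by rewrite -Eu.
exists t; suff : (c, A) =
    aff_mul (aff_mul (aff_tr (zmx t)) (c', A)) (aff_inv (phi (aff_tr (zmx t)))).
  by rewrite (twist_tr _ _ (G_tr_zmx t)) => -[].
have [uh' uph' upu] : [/\ is_aff h', is_aff (phi h') & is_aff (phi u)].
  by split; [exact: G_aff | exact/G_aff/autG | exact/G_aff/autG].
rewrite -Et -Eu Ec' Ec -[h in LHS](aff_mulgVK _ uh') (autM Gu Gh').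
by rewrite (aff_invM upu uph') !aff_mulA.
Qed.

Lemma reidemeister_infinite A' k : F (zmx A') -> \det (1%:M - A' *m aut_mx) = 0 ->
  ~ has_k_classes G phi k.
Proof.
move=> FA det0 [s [_ sG _ sall]].
have /det0P[v v0 vP] : \det (1%:M - zmx A' *m D) == 0.
  by rewrite -map_mxM -(map_mx1 intr) -map_mxB det_map_mx det0.
have [i0 vi0] : exists i0, v 0 i0 != 0.
  apply/existsP; apply: contraNT v0 => /existsPn v_eq0.
  by apply/eqP/rowP => i; rewrite mxE; exact/eqP/negPn.
(* Since [v] kills the image of [1 - A D], each class meets the family [x m]
   in at most [#|F|] members. *)
pose x m : aff := (zmx (delta_mx i0 0 *+ m) + holonomy_lift (zmx A'), zmx A').
have Gx m : G (x m).
  by rewrite /x -aff_tr_mull; exact: GM (G_tr_zmx _) (holonomy_liftP FA).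
have lab_ex m : exists p : nat * aff, [/\ (p.1 < k)%N, G p.2 &
    x m = aff_mul (aff_mul p.2 (nth aff1 s p.1)) (aff_inv (phi p.2))].
  by have [i ik [h Gh Eh]] := sall _ (Gx m); exists (i, h).
have [lab labP] := choice lab_ex; pose label m := ((lab m).1, (lab m).2.2).
apply: infinite_nat; rewrite -(_ : label @^-1` (`I_k `*` F) = [set: nat]); last first.
  apply/seteqP; split=> // m _; have [ik Gh _] := labP m.
  by split=> //=; exists (lab m).2.1; rewrite -surjective_pairing.
apply: finite_preimage; last exact: finite_setX (finite_II k) holonomy_finite.
move=> m m' _ _ [eq_i eq_h]; have [_ Gh Eh] := labP m; have [_ Gh' Eh'] := labP m'.
rewrite eq_i in Eh; have [t Et] := twisted_conj_same_linear Gh Gh' eq_h Eh Eh'.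
move/(congr1 (mulmx v)): Et; rewrite !mulmxDr mulmxA vP mul0mx addr0 => /addIr.
rewrite !raddfMn /= map_delta_mx -colE => /matrixP /(_ 0 0).
by rewrite !mulmxnE mxE => /(mulrIn vi0).
Qed.

Lemma reidemeister_le k : has_k_classes G phi k ->
  (k <= size normaliser_seq * twist_det_bound ^ n)%N.
Proof.
move=> classes_k; apply: reidemeister_le_of_det_neq0 (classes_k) => A' FA.
by apply/eqP => det0; exact: reidemeister_infinite FA det0 classes_k.
Qed.

End Automorphism.
End Crystallographic.

Theorem theorem5p6 (R : realType) (n : nat) (G : set (aff R n)) :
  crystallographic_Zn G ->
  finite_set (GLZ_normaliser (holonomy G)) ->
  finite_set (reidemeister_spectrum G).
Proof.
case=> G_subgroup _ G_trE normaliser_finite.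
apply: reidemeister_spectrum_finite => phi k phi_aut.
exact: reidemeister_le.
Qed.
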